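(* Let $G$ be a finite simple graph with adjacency matrix $A$, let $x$ be a vertex of $G$, and let $X$ be the set of neighbours of $x$ in $G$ (assume $0<|X|<|V(G)|$). Let $G_X$ be the graph obtained from $G$ by Seidel switching with respect to $X$. Then $x$ is an isolated vertex of $G_X$. Moreover, $\mathrm{2\text{-}rank}(G_X)=\mathrm{2\text{-}rank}(G)-2$ if $\mathbf{1}\in\mathrm{Col}_2(G)$, and $\mathrm{2\text{-}rank}(G_X)=\mathrm{2\text{-}rank}(G)$ otherwise.
   Context: All graphs are finite, simple and undirected. The 2-rank of a graph $G$, written $\mathrm{2\text{-}rank}(G)$, is the rank over $\mathbb{F}_2$ of its adjacency matrix. $\mathrm{Col}_2(G)$ denotes the column space over $\mathbb{F}_2$ of the adjacency matrix of $G$, and $\mathbf{1}$ is the all-ones vector. For a vertex subset $X$ of a graph $G=(V,E)$, Seidel switching with respect to $X$ produces the graph on $V$ in which all edges between $X$ and $V\setminus X$ are removed and every non-edge between $X$ and $V\setminus X$ is made an edge, while edges with both ends in $X$ or both ends in $V\setminus X$ are unchanged. *)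

From HB Require Import structures.
From mathcomp Require Import all_boot all_order all_algebra.
Set Implicit Arguments. Unset Strict Implicit. Unset Printing Implicit Defensive.
Import GRing.Theory.
Local Open Scope ring_scope.

Definition simple_graph (n : nat) (e : rel 'I_n) : Prop :=
  symmetric e /\ irreflexive e.

Definition adjmx2 (n : nat) (e : rel 'I_n) : 'M['F_2]_n :=
  \matrix_(i, j) ((e i j : nat)%:R).

Definition two_rank (n : nat) (e : rel 'I_n) : nat := \rank (adjmx2 e).

Definition ones2 (n : nat) : 'cV['F_2]_n := const_mx 1.

(* v lies in the column space over F_2 of the adjacency matrix of e:
   the column space of A is the row space of A^T. *)
Definition in_Col2 (n : nat) (e : rel 'I_n) (v : 'cV['F_2]_n) : bool :=
  (v^T <= (adjmx2 e)^T)%MS.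

Definition seidel_switch (n : nat) (e : rel 'I_n) (X : {set 'I_n}) : rel 'I_n :=
  fun u v => if (u \in X) == (v \in X) then e u v else ~~ e u v.

Definition isolated (n : nat) (e : rel 'I_n) (x : 'I_n) : Prop :=
  forall y, ~~ e x y.

(* Over F_2, write a := e_x A for the neighbourhood row of x and 1 for the
   all-ones row.  Switching with respect to the neighbourhood of x adds
   a_i + a_k to the entry (i, k), and since A_xx = 0 this is exactly the
   congruence B = P A P^T by P = I - 1^T e_x.  Right multiplication by P^T
   kills only the line spanned by 1, so each of the two multiplications
   lowers the rank by one exactly when 1 lies in the row space of the
   matrix it acts on.  For A this is the condition 1 in Col_2(G); for P A it
   is the same condition because A is alternating: if 1 = w A then
   w 1^T = w A w^T = 0, hence w P = w and 1 = w P A. *)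

From HB Require Import structures.
From mathcomp Require Import all_boot all_order all_algebra.
Set Implicit Arguments.
Unset Strict Implicit.
Unset Printing Implicit Defensive.
Import GRing.Theory.
Local Open Scope ring_scope.

Section Char2.
Variables (R : comNzRingType) (n : nat).
Hypothesis pcharR2 : 2 \in [pchar R].

Lemma alternating_form (A : 'M[R]_n) (w : 'rV_n) :
  A^T = A -> (forall i, A i i = 0) -> w *m A *m w^T = 0.
Proof.
move=> symA diagA.
pose U := \matrix_(i, k) (if (i < k)%N then A i k else 0).
have -> : A = U + U^T.
  apply/matrixP => i k; rewrite !mxE.
  case: (ltngtP i k) => [_|_|/val_inj <-]; rewrite ?addr0 ?add0r ?diagA //.
  by rewrite -[in LHS]symA mxE.
rewrite mulmxDr mulmxDl.
have -> : w *m U^T *m w^T = (w *m U *m w^T)^T by rewrite !trmx_mul trmxK mulmxA.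
apply/matrixP => i j.
by rewrite (ord1 i) (ord1 j) !mxE addrr_pchar2.
Qed.

End Char2.

Section RankCap.
Variable F : fieldType.

Lemma mxrank_cap_rV m n (X : 'M[F]_(m, n)) (v : 'rV_n) :
  v != 0 -> \rank (X :&: v)%MS = (v <= X)%MS.
Proof.
move=> v0; have rv : \rank v = 1%N by rewrite rank_rV v0.
case: (boolP (v <= X)%MS) => [/capmx_idPr -> // | vX].
have [] := mxrank_leqif_eq (capmxSr X v); rewrite rv leq_eqVlt.
case/orP => [/eqP-> | ]; last by rewrite ltnS leqn0 => /eqP.
rewrite eqxx => /esym/andP[_ vXv].
by rewrite (submx_trans vXv (capmxSl _ _)) in vX.
Qed.

Lemma mxrank_mul_ker_rV m n p (X : 'M[F]_(m, n)) (Q : 'M_(n, p)) (v : 'rV_n) :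
  v != 0 -> (kermx Q == v)%MS -> (\rank (X *m Q) + (v <= X)%MS)%N = \rank X.
Proof.
move=> v0 /eqmxP kerQ.
by rewrite -mxrank_cap_rV // -(cap_eqmx (eqmx_refl X) kerQ) mxrank_mul_ker.
Qed.

End RankCap.

(* When [v *m u^T = 1], [w |-> w *m hyperplane_proj u v] projects onto the
   hyperplane orthogonal to [v] along [u]. *)
Definition hyperplane_proj {R : pzRingType} {n} (u v : 'rV[R]_n) : 'M[R]_n :=
  1%:M - v^T *m u.

Section HyperplaneCongruence.
Variables (F : fieldType) (n : nat) (u v : 'rV[F]_n).
Hypothesis vu1 : v *m u^T = 1%:M.
Local Notation P := (hyperplane_proj u v).

Lemma hyperplane_proj_tr : P^T = 1%:M - u^T *m v.
Proof. by rewrite /hyperplane_proj linearB /= trmx1 trmx_mul trmxK. Qed.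

Lemma kermx_hyperplane_proj_tr : (kermx P^T == v)%MS.
Proof.
rewrite hyperplane_proj_tr; apply/andP; split; last first.
  by apply/sub_kermxP; rewrite mulmxBr mulmx1 mulmxA vu1 mul1mx subrr.
apply/row_subP => i; set r := row i _.
have /sub_kermxP : (r <= kermx (1%:M - u^T *m v))%MS by exact: row_sub.
rewrite mulmxBr mulmx1 mulmxA => /eqP; rewrite subr_eq0 => /eqP ->.
exact: submxMl.
Qed.

Lemma hyperplane_congrE (A : 'M[F]_n) : A^T = A ->
  P *m A *m P^T =
  A - v^T *m (u *m A) - (u *m A)^T *m v + v^T *m (u *m A *m u^T) *m v.
Proof.
move=> symA; rewrite hyperplane_proj_tr /hyperplane_proj.
rewrite mulmxBl mul1mx !mulmxBr !mulmx1 trmx_mul symA !mulmxA.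
by rewrite mulmxBl (mulmxBl _ _ v) opprD opprK addrA.
Qed.

Lemma mxrank_hyperplane_congr (A : 'M[F]_n) :
  A^T = A -> (forall w : 'rV_n, w *m A *m w^T = 0) ->
  (\rank (P *m A *m P^T) + (v <= A)%MS * 2)%N = \rank A.
Proof.
move=> symA altA.
have v0 : v != 0.
  by apply: contra_eq_neq vu1 => ->; rewrite mul0mx eq_sym oner_neq0.
have vPA : (v <= P *m A)%MS = (v <= A)%MS.
  apply/idP/idP => [/submx_trans -> // | /submxP[w vw]]; first exact: submxMl.
  have wv : w *m v^T = 0 by rewrite vw trmx_mul symA mulmxA altA.
  apply/submxP; exists w.
  by rewrite mulmxA /hyperplane_proj mulmxBr mulmx1 mulmxA wv mul0mx subr0.
have rPA : (\rank (P *m A) + (v <= A)%MS)%N = \rank A.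
  by rewrite -mxrank_tr trmx_mul symA mxrank_mul_ker_rV ?kermx_hyperplane_proj_tr.
have := mxrank_mul_ker_rV (P *m A) v0 kermx_hyperplane_proj_tr.
by rewrite vPA -rPA => <-; rewrite -addnA addnn -muln2.
Qed.

End HyperplaneCongruence.

Lemma ones_mul_delta (R : pzRingType) n (x : 'I_n) :
  (const_mx 1 : 'rV[R]_n) *m (delta_mx 0 x)^T = 1%:M.
Proof. by apply/matrixP => i j; rewrite trmx_delta -colE !mxE (ord1 i) (ord1 j). Qed.

Section SeidelSwitching.
Variables (n : nat) (e : rel 'I_n) (x : 'I_n).
Hypotheses (symE : symmetric e) (irrE : irreflexive e).
Local Notation P := (hyperplane_proj (delta_mx 0 x) (const_mx 1 : 'rV['F_2]_n)).

Lemma adjmx2_tr : (adjmx2 e)^T = adjmx2 e.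
Proof. by apply/matrixP => i j; rewrite !mxE symE. Qed.

Lemma adjmx2_diag i : adjmx2 e i i = 0.
Proof. by rewrite mxE irrE. Qed.

Lemma adjmx2_alternating (w : 'rV_n) : w *m adjmx2 e *m w^T = 0.
Proof. exact: alternating_form (pchar_Fp _) _ _ adjmx2_tr adjmx2_diag. Qed.

Lemma adjmx2_switch_nbhd :
  adjmx2 (seidel_switch e [set y | e x y]) = P *m adjmx2 e *m P^T.
Proof.
rewrite hyperplane_congrE ?adjmx2_tr // -rowE trmx_delta -colE.
apply/matrixP => i k; rewrite !mxE !big_ord1 !mxE /seidel_switch !inE.
rewrite big_ord1 !mxE irrE.
by case: (e x i) (e x k) (e i k) => [] [] []; apply/val_inj.
Qed.

End SeidelSwitching.

Theorem lemma2p1 (n : nat) (e : rel 'I_n) (x : 'I_n) :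
  simple_graph e ->
  (0 < #|[set y | e x y]| < n)%N ->
  isolated (seidel_switch e [set y | e x y]) x /\
  (if in_Col2 e (ones2 n)
   then (two_rank (seidel_switch e [set y | e x y]) + 2)%N = two_rank e
   else two_rank (seidel_switch e [set y | e x y]) = two_rank e).
Proof.
move=> [symE irrE] _.
split; first by move=> y; rewrite /seidel_switch !inE irrE; case: (e x y).
rewrite /in_Col2 /two_rank /ones2 trmx_const (adjmx2_tr symE).
rewrite (adjmx2_switch_nbhd x symE irrE).
have := mxrank_hyperplane_congr (ones_mul_delta _ x) (adjmx2_tr symE)
  (adjmx2_alternating symE irrE).
by case: (_ <= _)%MS => <-; rewrite ?addn0.
Qed.
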